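(* A regular language $L\subseteq\Sigma^*$ is biRFSA if and only if it is topological. Moreover, if $L$ is topological, then the map $\theta\colon J(\mathrm{LQ}(L))\to J(\mathrm{LQ}(L^r))$ defined by $\mathrm{dr}_L(\theta(j))=\tau(j)$, where $\tau(j)=\bigcup\{X\in\mathrm{LQ}(L): j\not\subseteq X\}$, is an nfa isomorphism from $N_L$ to $(N_{L^r})^r$.
   Context: $u^{-1}L=\{w:uw\in L\}$, $U^{-1}L=\bigcup_{u\in U}u^{-1}L$; $w^r$ is the reversal of $w$, $K^r=\{w^r:w\in K\}$, $\overline K=\Sigma^*\setminus K$. $\mathrm{LQ}(L)$ is the finite lattice (under $\subseteq$) of finite unions (including $\emptyset$) of left derivatives of $L$; $J(S)$ is the set of join-irreducible elements of a finite lattice $S$. $L$ is topological if $\mathrm{LQ}(L)$ is a distributive lattice. The canonical residual automaton $N_L$ is the nfa with states $J(\mathrm{LQ}(L))$, transitions $X\xrightarrow{a}Y$ iff $Y\subseteq a^{-1}X$, initial states those $X\subseteq L$, final states those $X$ with $\epsilon\in X$. For an nfa $N$, $N^r$ is its reverse (transitions reversed, initial and final states swapped). $L$ is biRFSA if $N_L$ is isomorphic (as an nfa) to $(N_{L^r})^r$. $\mathrm{dr}_L\colon\mathrm{LQ}(L^r)\to\mathrm{LQ}(L)$, $K\mapsto(\overline{K^r})^{-1}L$, is an order-reversing bijection which restricts to a bijection from $J(\mathrm{LQ}(L^r))$ onto the meet-irreducible elements of $\mathrm{LQ}(L)$. *)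

From mathcomp Require Import all_boot.
Unset Printing Implicit Defensive.

Section Lang.
Variable A : finType.

(* Languages over A: arbitrary subsets of A^* (Leibniz equality of languages
   is set equality, via functional/propositional extensionality). *)
Definition word := seq A.
Definition lang := word -> Prop.

Definition lsub (K1 K2 : lang) : Prop := forall w, K1 w -> K2 w.
Definition lunion (K1 K2 : lang) : lang := fun w => K1 w \/ K2 w.
Definition lempty : lang := fun _ => False.

Definition lderiv (u : word) (L : lang) : lang := fun w => L (u ++ w).
Definition lderivs (U : lang) (L : lang) : lang :=
  fun w => exists u, U u /\ L (u ++ w).
Definition lrev (K : lang) : lang := fun w => K (rev w).
Definition lcompl (K : lang) : lang := fun w => ~ K w.

Record dfa := DFA {
  dstate : finType;
  dstart : dstate;
  dstep : dstate -> A -> dstate;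
  dfinal : pred dstate }.

Definition dfa_accepts (M : dfa) (w : word) : bool :=
  dfinal M (foldl (dstep M) (dstart M) w).

Definition regular (L : lang) : Prop :=
  exists M : dfa, forall w, L w <-> dfa_accepts M w.

Definition LQ (L : lang) (K : lang) : Prop :=
  exists U : seq word, K = lderivs (fun u => u \in U) L.

Definition LQ_meet (L : lang) (x y m : lang) : Prop :=
  [/\ LQ L m, lsub m x, lsub m y &
      forall k, LQ L k -> lsub k x -> lsub k y -> lsub k m].

(* L is topological: the lattice LQ(L) (join = union, meet = glb in LQ(L))
   is distributive. *)
Definition topological (L : lang) : Prop :=
  forall x y z m1 m2 m3, LQ L x -> LQ L y -> LQ L z ->
    LQ_meet L x (lunion y z) m1 -> LQ_meet L x y m2 -> LQ_meet L x z m3 ->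
    m1 = lunion m2 m3.

Definition JI (L : lang) (X : lang) : Prop :=
  [/\ LQ L X, X <> lempty &
      forall Y Z, LQ L Y -> LQ L Z -> X = lunion Y Z -> X = Y \/ X = Z].

Record nfa := NFA {
  nstate : Type;
  ntrans : nstate -> A -> nstate -> Prop;
  ninit : nstate -> Prop;
  nfinal : nstate -> Prop }.

Definition nfa_rev (N : nfa) : nfa :=
  @NFA (nstate N) (fun p a q => ntrans N q a p) (nfinal N) (ninit N).

Definition nfa_iso (N1 N2 : nfa) (f : nstate N1 -> nstate N2) : Prop :=
  [/\ bijective f,
      forall p a q, ntrans N1 p a q <-> ntrans N2 (f p) a (f q),
      forall p, ninit N1 p <-> ninit N2 (f p) &
      forall p, nfinal N1 p <-> nfinal N2 (f p)].

Definition nfa_isomorphic (N1 N2 : nfa) : Prop :=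
  exists f, @nfa_iso N1 N2 f.

Definition JIstate (L : lang) := {X : lang | JI L X}.

Definition canRFSA (L : lang) : nfa :=
  @NFA (JIstate L)
    (fun X a Y => lsub (sval Y) (lderiv [:: a] (sval X)))
    (fun X => lsub (sval X) L)
    (fun X => sval X [::]).

Definition biRFSA (L : lang) : Prop :=
  nfa_isomorphic (canRFSA L) (nfa_rev (canRFSA (lrev L))).

Definition dr (L : lang) (K : lang) : lang := lderivs (lcompl (lrev K)) L.

Definition tau (L : lang) (j : lang) : lang :=
  fun w => exists X, [/\ LQ L X, ~ lsub j X & X w].

End Lang.

Arguments lsub {A}. Arguments lunion {A}. Arguments lempty {A}.
Arguments lderiv {A}. Arguments lderivs {A}. Arguments lrev {A}.
Arguments lcompl {A}. Arguments regular {A}. Arguments LQ {A}.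
Arguments LQ_meet {A}. Arguments topological {A}. Arguments JI {A}.
Arguments nfa_rev {A}. Arguments nfa_iso {A}. Arguments nfa_isomorphic {A}.
Arguments JIstate {A}. Arguments canRFSA {A}. Arguments biRFSA {A}.
Arguments dr {A}. Arguments tau {A}.

From mathcomp Require Import all_boot.
From mathcomp Require Import boolp.

(* A regular language L is biRFSA iff it is topological, and then the states
   of N_L and of N_{L^r} are matched by  j |-> dual(j), the set of words v
   with j <= (rev v)^{-1}L; this map satisfies dr_L(dual j) = tau(j).

   Regularity is only used through the finiteness of the residuals of L and
   of L^r.  Then LQ(L) is finite, so every element is a union of
   join-irreducibles (JI_cover), every join-irreducible is a derivative
   (JI_deriv), and L is topological iff all join-irreducibles are join-prime
   (topological_join_prime).  A derivative q^{-1}L has its dual in LQ(L^r) iff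
   it is the least element of LQ(L) containing some word p; its dual is then
   (rev p)^{-1}L^r, the least element of LQ(L^r) containing rev q (dual_least,
   dual_below, least_of_LQ_dual).  For topological L join-primes are such
   least elements, so dual maps J(LQ(L)) into J(LQ(L^r)) (dual_JI); it is onto
   (dual_surj), injective, and exchanges transitions, initial and final states
   (dual_trans, dual_final), which gives the isomorphism (iso_dual).
   Conversely, in a biRFSA the state matched with X = q^{-1}L accepts exactly
   dual(X), so dual(X) lies in LQ(L^r) and X is join-prime
   (biRFSA_join_prime).  Any theta with dr_L(theta j) = tau(j) is dual, since
   dr_L is injective on LQ(L^r) (dr_inj). *)

Section Languages.
Context {A : finType}.
Implicit Types (L X Y Z j : lang A) (u v w p q : word A).

(* L has finitely many left derivatives: u^{-1}L depends only on a key of u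
   ranging over a finite type (for a regular language, the state reached by a
   dfa reading u). *)
Definition finite_residuals L :=
  exists (T : finType) (key : word A -> T),
    forall u v, key u = key v -> lderiv u L = lderiv v L.

Lemma JIstate_eq {L} (X Y : JIstate L) : sval X = sval Y -> X = Y.
Proof. by case: X Y => [X XJ] [Y YJ] /= e; apply: eq_exist. Qed.

Lemma lderivs_cons L u U :
  lderivs (fun x => x \in u :: U) L = lunion (lderiv u L) (lderivs (fun x => x \in U) L).
Proof.
apply/predeqP => w; split=> [[x []]|[Luw|[x [xU Lxw]]]].
- by rewrite in_cons => /orP [/eqP -> | xU] Lxw; [left | right; exists x].
- by exists u; rewrite mem_head.
- by exists x; rewrite in_cons xU orbT.
Qed.

Lemma LQ_union {L X Y} : LQ L X -> LQ L Y -> LQ L (lunion X Y).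
Proof.
case=> U -> [V ->]; exists (U ++ V); apply/predeqP => w; split.
- by case=> [[u [uU Luw]]|[u [uV Luw]]]; exists u; rewrite mem_cat ?uU ?uV ?orbT.
- by case=> u []; rewrite mem_cat => /orP [uU|uV] Luw; [left|right]; exists u.
Qed.

Lemma LQ_lderiv L u : LQ L (lderiv u L).
Proof.
exists [:: u]; apply/predeqP => w; split=> [Luw|[x []]]; first by exists u; rewrite mem_seq1.
by rewrite mem_seq1 => /eqP ->.
Qed.

Lemma LQ_lderiv1 {L} a {X} : LQ L X -> LQ L (lderiv [:: a] X).
Proof.
case=> U ->; exists [seq rcons u a | u <- U]; apply/predeqP => w; split.
- by case=> u [uU Lu]; exists (rcons u a); rewrite cat_rcons (map_f (rcons^~ a)).
- by case=> x [/mapP [u uU ->] Lu]; exists u; rewrite -cat_rcons.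
Qed.

Lemma LQ_cover {L X w} : LQ L X -> X w ->
  exists u, lsub (lderiv u L) X /\ L (u ++ w).
Proof. by case=> U -> [u [uU Luw]]; exists u; split=> // x Lux; exists u. Qed.

Lemma LQ_saturated {L X} : LQ L X -> X = lderivs (fun u => lsub (lderiv u L) X) L.
Proof.
move=> XL; apply/predeqP => w; split=> [Xw | [u [uX Luw]]]; last exact: uX.
by have [u [uX Luw]] := LQ_cover XL Xw; exists u.
Qed.

Definition union_prime L (F : lang A -> Prop) :=
  ~ F lempty /\ forall Y Z, LQ L Y -> LQ L Z -> F (lunion Y Z) -> F Y \/ F Z.

Lemma union_prime_seq {L F} (U : seq (word A)) : union_prime L F ->
  F (lderivs (fun u => u \in U) L) -> exists2 u, u \in U & F (lderiv u L).
Proof.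
case=> F0 Fu; elim: U => [|u U IH].
  have -> : lderivs (fun u => u \in Nil (word A)) L = lempty.
    by apply/predeqP => w; split=> [[u []]|[]].
  by move/F0.
rewrite lderivs_cons => /(Fu _ _ (LQ_lderiv L u) (ex_intro _ U erefl)) [Fu'|/IH [x xU Fx]].
- by exists u; rewrite ?mem_head.
- by exists x; rewrite // in_cons xU orbT.
Qed.

Definition join_prime L X :=
  forall Y Z, LQ L Y -> LQ L Z -> lsub X (lunion Y Z) -> lsub X Y \/ lsub X Z.

Definition least L p X := [/\ LQ L X, X p & forall Y, LQ L Y -> Y p -> lsub X Y].

Definition directed L p := forall Y Z, LQ L Y -> LQ L Z -> Y p -> Z p ->
  exists C, [/\ LQ L C, C p, lsub C Y & lsub C Z].

Lemma JI_union_prime {L X} : JI L X -> union_prime L (eq X).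
Proof. by case=> _ X0 XJ; split. Qed.

Lemma least_JI {L p X} : least L p X -> JI L X.
Proof.
case=> XL Xp Xmin; split=> // [X0|Y Z YL ZL XE]; first by rewrite X0 in Xp.
have : lunion Y Z p by rewrite -XE.
case=> [Yp|Zp]; [left|right]; apply/predeqP => w.
- by split=> [/(Xmin _ YL Yp) | Yw] //; rewrite XE; left.
- by split=> [/(Xmin _ ZL Zp) | Zw] //; rewrite XE; right.
Qed.

Lemma least_join_prime {L p X} : least L p X -> join_prime L X.
Proof. by case=> _ Xp Xmin Y Z YL ZL /(_ p Xp) [Yp|Zp]; [left|right]; apply: Xmin. Qed.

Lemma lderiv_lrev L v w : lderiv v (lrev L) w = L (rev w ++ rev v).
Proof. by rewrite /lderiv /lrev rev_cat. Qed.

(* The dual of j: the words v such that j lies below (rev v)^{-1}L.  For j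
   join-irreducible in LQ(L) it is the state of N_{L^r} matched with j. *)
Definition dual L j : lang A := fun v => lsub j (lderiv (rev v) L).

Lemma dual_deriv L q : dual L (lderiv q L) (rev q).
Proof. by rewrite /dual revK. Qed.

Lemma dual_least {L p j} : least L p j -> dual L j = lderiv (rev p) (lrev L).
Proof.
case=> _ jp jmin; apply/predeqP => v; rewrite lderiv_lrev revK.
by split=> [/(_ p jp) | Lvp] //; apply: jmin (LQ_lderiv L (rev v)) Lvp.
Qed.

Lemma dual_below {L q K} : LQ (lrev L) K -> K (rev q) -> lsub (dual L (lderiv q L)) K.
Proof.
case=> V -> [x [xV]]; rewrite /lrev rev_cat revK => Lqx v qv.
by exists x; split=> //; rewrite /lrev rev_cat; apply: qv.
Qed.

Lemma least_of_LQ_dual L q :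
  LQ (lrev L) (dual L (lderiv q L)) -> exists p, least L p (lderiv q L).
Proof.
case=> V dualE; have := dual_deriv L q; rewrite dualE => -[x [xV]].
rewrite /lrev rev_cat revK => Lqx; exists (rev x); split=> // [|Y YL Yx].
  exact: LQ_lderiv.
have [u [uY Lux]] := LQ_cover YL Yx.
have : dual L (lderiv q L) (rev u) by rewrite dualE; exists x; rewrite /lrev rev_cat revK.
by rewrite /dual revK => qu w /qu /uY.
Qed.

Lemma dual_inj {L q1 q2} :
  dual L (lderiv q1 L) = dual L (lderiv q2 L) -> lderiv q1 L = lderiv q2 L.
Proof.
move=> e; have s21 := dual_deriv L q1; have s12 := dual_deriv L q2.
rewrite e /dual revK in s21; rewrite -e /dual revK in s12.
by apply/predeqP => w; split=> [/s12|/s21].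
Qed.

Lemma dual_trans L q Y a : lsub Y (lderiv [:: a] (lderiv q L)) <->
  lsub (dual L (lderiv q L)) (lderiv [:: a] (dual L Y)).
Proof.
split=> [Ya v qv w Yw | dY w Yw].
- by move: (qv _ (Ya w Yw)); rewrite /lderiv /= rev_cons cat_rcons.
- by have := dY _ (dual_deriv L q) w Yw; rewrite /lderiv /= rev_cons revK cat_rcons.
Qed.

Lemma dual_final L q : lderiv q L [::] <-> lsub (dual L (lderiv q L)) (lrev L).
Proof.
split=> [q0 v qv | /(_ _ (dual_deriv L q))].
- by move: (qv _ q0); rewrite /lderiv /lrev cats0.
- by rewrite /lrev revK /lderiv cats0.
Qed.

Definition dr_inv L X : lang A := fun v => ~ lsub (lderiv (rev v) L) X.

Lemma dr_invK {L K} : LQ (lrev L) K -> dr_inv L (dr L K) = K.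
Proof.
case=> V ->; apply/predeqP => v; split=> [nsub | [x [xV Lxv]] sub].
- apply: contrapT => nK; apply: nsub => w Lvw; exists (rev v).
  by rewrite /lcompl /lrev revK.
- have Lvx : lderiv (rev v) L (rev x) by move: Lxv; rewrite /lrev rev_cat.
  have [u [nKu Lux]] := sub _ Lvx.
  by apply: nKu; exists x; split=> //; rewrite /lrev rev_cat revK.
Qed.

Lemma dr_inj {L K1 K2} : LQ (lrev L) K1 -> LQ (lrev L) K2 -> dr L K1 = dr L K2 -> K1 = K2.
Proof. by move=> K1L K2L e; rewrite -(dr_invK K1L) -(dr_invK K2L) e. Qed.

Lemma dr_dual L j : dr L (dual L j) = tau L j.
Proof.
apply/predeqP => w; split=> [[u [nju Luw]] | [X [XL njX Xw]]].
- exists (lderiv u L); split=> //; first exact: LQ_lderiv.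
  by move: nju; rewrite /lcompl /lrev /dual revK.
- have [u [uX Luw]] := LQ_cover XL Xw; exists u; split=> //.
  by rewrite /lcompl /lrev /dual revK => ju; apply: njX => z /ju /uX.
Qed.

(* A regular language has finitely many residuals: u^{-1}L only depends on
   the state reached by a dfa for L on u. *)
Lemma regular_finite_residuals {L} : regular L -> finite_residuals L.
Proof.
case=> M LM; exists (dstate _ M), (foldl (dstep _ M) (dstart _ M)) => u v e.
by apply/predeqP => w; rewrite /lderiv !LM /dfa_accepts !foldl_cat e.
Qed.

(* So does its reversal: v^{-1}L^r only depends on the set of states from
   which the dfa reaches a final state on rev v. *)
Lemma regular_rev_finite_residuals {L} : regular L -> finite_residuals (lrev L).
Proof.
case=> M LM; exists {ffun dstate _ M -> bool}.
exists (fun v => [ffun s => dfinal _ M (foldl (dstep _ M) s (rev v))]) => u v e.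
apply/predeqP => w; rewrite !lderiv_lrev !LM /dfa_accepts !foldl_cat.
by move/ffunP/(_ (foldl (dstep _ M) (dstart _ M) (rev w))): e; rewrite !ffunE => ->.
Qed.

End Languages.

Section FiniteResiduals.
Context {A : finType} {L : lang A} (finL : finite_residuals L).
Implicit Types (X Y Z j : lang A) (u v w p q : word A).

Lemma finite_subfamily (U : lang A) : exists V : seq (word A),
  (forall v, v \in V -> U v) /\ lderivs U L = lderivs (fun v => v \in V) L.
Proof.
case: finL => T [key keyE].
have [V [VU Vkey]] : exists V : seq (word A), (forall v, v \in V -> U v) /\
    forall u, U u -> key u \in enum T -> exists2 v, v \in V & key v = key u.
  elim: (enum T) => [|k ks [V [VU Vkey]]]; first by exists [::].
  have [[u0 [Uu0 ku0]] | nok] := pselect (exists u, U u /\ key u = k).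
  - exists (u0 :: V); split=> [v|u Uu].
    + by rewrite in_cons => /orP [/eqP -> | /VU].
    + rewrite in_cons => /orP [/eqP ku | /(Vkey u Uu) [v vV kv]].
      * by exists u0; rewrite ?mem_head // ku0 ku.
      * by exists v; rewrite // in_cons vV orbT.
  - exists V; split=> // u Uu; rewrite in_cons => /orP [/eqP ku | ]; last exact: Vkey.
    by case: nok; exists u.
exists V; split=> //; apply/predeqP => w; split=> [[u [Uu Luw]] | [v [vV Lvw]]].
- have [v vV kv] := Vkey u Uu (mem_enum T (key u)).
  by exists v; split; rewrite // -/(lderiv v L w) (keyE _ _ kv).
- by exists v; split=> //; apply: VU.
Qed.

Lemma LQ_lderivs (U : lang A) : LQ L (lderivs U L).
Proof. by have [V [_ ->]] := finite_subfamily U; exists V. Qed.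

Lemma union_prime_deriv {F} {U : lang A} : union_prime L F ->
  F (lderivs U L) -> exists2 u, U u & F (lderiv u L).
Proof.
have [V [VU ->]] := finite_subfamily U.
by move=> Fp /(union_prime_seq _ Fp) [v /VU Uv Fv]; exists v.
Qed.

Lemma JI_deriv {X} : JI L X -> exists q, X = lderiv q L.
Proof.
move=> XJ; have [XL _ _] := XJ.
by have [q _ ->] := union_prime_deriv (JI_union_prime XJ) (LQ_saturated XL); exists q.
Qed.

Lemma LQ_minimal (P : lang A -> Prop) X : (forall Y, P Y -> LQ L Y) -> P X ->
  exists Y, [/\ P Y, lsub Y X & forall Z, P Z -> lsub Z Y -> Z = Y].
Proof.
case: finL => T [key keyE] PL.
(* support Y: the keys of the derivatives below Y; it strictly grows along
   strict inclusions in LQ(L). *)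
pose support Y := [set t | `[< exists u, key u = t /\ lsub (lderiv u L) Y >]].
have support_lt Y Z : LQ L Y -> lsub Z Y -> Z <> Y -> #|support Z| < #|support Y|.
  move=> YL ZY nZY; apply/proper_card/properP; split.
  - apply/subsetP => t; rewrite !inE => /asboolP [u [<- uZ]].
    by apply/asboolP; exists u; split=> // w /uZ /ZY.
  - have [w [Yw nZw]] : exists w, Y w /\ ~ Z w.
      apply: contrapT => noW; apply: nZY; apply/predeqP => w; split=> [/ZY //| Yw].
      by apply: contrapT => nZw; apply: noW; exists w.
    have [u [uY Luw]] := LQ_cover YL Yw.
    exists (key u); rewrite inE; first by apply/asboolP; exists u.
    apply/asboolP => -[u' [ku' u'Z]]; apply: nZw; apply: u'Z.
    by rewrite -/(lderiv u' L w) (keyE _ _ ku').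
have [n] := ubnP #|support X|; elim: n X => // n IH X ltXn PX.
have [[Z [PZ ZX nZX]] | minX] := pselect (exists Z, [/\ P Z, lsub Z X & Z <> X]).
- have [Y [PY YZ minY]] := IH Z (leq_trans (support_lt _ _ (PL _ PX) ZX nZX) ltXn) PZ.
  by exists Y; split=> // w /YZ /ZX.
- by exists X; split=> // Z PZ ZX; apply: contrapT => nZX; apply: minX; exists Z.
Qed.

(* Every word of an element X of LQ(L) lies in a join-irreducible element
   below X: a minimal element of LQ(L) below X containing it. *)
Lemma JI_cover {X w} : LQ L X -> X w -> exists J, [/\ JI L J, lsub J X & J w].
Proof.
move=> XL Xw; pose P Y := [/\ LQ L Y, lsub Y X & Y w].
have PL Y : P Y -> LQ L Y by case.
have [J [[JL JX Jw] _ Jmin]] := LQ_minimal P X PL (And3 XL (fun _ h => h) Xw).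
exists J; split=> //; split=> // [J0|Y Z YL ZL JE]; first by rewrite J0 in Jw.
have YJ : lsub Y J by rewrite JE => v; left.
have ZJ : lsub Z J by rewrite JE => v; right.
have : lunion Y Z w by rewrite -JE.
case=> [Yw|Zw]; [left|right]; apply/esym/Jmin => //; split=> // v.
- by move/YJ/JX.
- by move/ZJ/JX.
Qed.

Lemma least_exists {p Y} : LQ L Y -> Y p -> directed L p -> exists J, least L p J.
Proof.
move=> YL Yp dirp.
have [J [[JL Jp] _ Jmin]] :=
  LQ_minimal (fun Z => LQ L Z /\ Z p) Y (fun Z => @proj1 _ _) (conj YL Yp).
exists J; split=> // Z ZL Zp.
have [C [CL Cp CJ CZ]] := dirp J Z JL ZL Jp Zp.
by rewrite -(Jmin C (conj CL Cp) CJ).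
Qed.

(* A join-irreducible, join-prime j is the least element of LQ(L) containing
   one of its words; otherwise j would lie below tau(j), the union of the
   derivatives not above j. *)
Lemma join_prime_least {j} : JI L j -> join_prime L j -> exists p, least L p j.
Proof.
case=> jL j0 _ jp; apply: contrapT => nleast.
have sub_prime : union_prime L (lsub j).
  split=> [j_empty|]; last exact: jp.
  by apply: j0; apply/predeqP => w; split=> [/j_empty|[]].
pose U u := ~ lsub j (lderiv u L).
have jU : lsub j (lderivs U L).
  move=> w jw; apply: contrapT => nU; apply: nleast; exists w; split=> // Y YL Yw.
  have [u [uY Luw]] := LQ_cover YL Yw.
  have ju : lsub j (lderiv u L) by apply: contrapT => nju; apply: nU; exists u.
  by move=> v /ju /uY.
by have [u nju /nju] := union_prime_deriv sub_prime jU.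
Qed.

Definition meet X Y : lang A :=
  lderivs (fun u => lsub (lderiv u L) X /\ lsub (lderiv u L) Y) L.

Lemma meetP X Y : LQ_meet L X Y (meet X Y).
Proof.
split; first exact: LQ_lderivs.
- by move=> w [u [[uX _] Luw]]; apply: uX.
- by move=> w [u [[_ uY] Luw]]; apply: uY.
- move=> K KL KX KY w Kw; have [u [uK Luw]] := LQ_cover KL Kw.
  by exists u; split=> //; split=> v /uK; [apply: KX | apply: KY].
Qed.

Lemma topological_join_prime :
  topological L <-> forall X, JI L X -> join_prime L X.
Proof.
split=> [topo X XJ Y Z YL ZL XYZ | jp x y z m1 m2 m3 xL yL zL].
- (* X = X meet (Y u Z) = (X meet Y) u (X meet Z), so X is one of them *)
  have [XL _ XJ'] := XJ.
  have Xmeet : LQ_meet L X (lunion Y Z) X by split=> // K _ KX _.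
  have := topo X Y Z X (meet X Y) (meet X Z) XL YL ZL Xmeet (meetP X Y) (meetP X Z).
  case/(XJ' _ _ (LQ_lderivs _) (LQ_lderivs _)) => ->; [left|right].
  + by case: (meetP X Y) => _ _.
  + by case: (meetP X Z) => _ _.
- case=> m1L m1x m1yz m1max [m2L m2x m2y m2max] [m3L m3x m3z m3max].
  have m23 : lsub (lunion m2 m3) m1.
    apply: m1max; first exact: LQ_union.
    + by move=> v [/m2x|/m3x].
    + by move=> v [/m2y|/m3z]; [left|right].
  (* a word of m1 lies in a join-prime J below x and y u z, hence in m2 or m3 *)
  apply/predeqP => w; split=> [m1w|]; last exact: m23.
  have [J [JJ Jm1 Jw]] := JI_cover m1L m1w; have [JL _ _] := JJ.
  have Jx : lsub J x by move=> v /Jm1 /m1x.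
  have [Jy|Jz] := jp J JJ y z yL zL (fun v h => m1yz v (Jm1 v h)).
  + by left; apply: (m2max J JL Jx Jy).
  + by right; apply: (m3max J JL Jx Jz).
Qed.

End FiniteResiduals.

Section Duality.
Context {A : finType} {L : lang A}.
Context (finL : finite_residuals L) (finR : finite_residuals (lrev L)).
Implicit Types (X Y Z K : lang A) (u v w p q : word A).

Lemma LQ_dr_inv X : LQ (lrev L) (dr_inv L X).
Proof.
have -> : dr_inv L X = lderivs (fun y => ~ X (rev y)) (lrev L); last exact: LQ_lderivs.
apply/predeqP => v; split=> [nsub | [y [nXy Lyv]] sub].
- apply: contrapT => noy; apply: nsub => z Lvz; apply: contrapT => nXz; apply: noy.
  by exists (rev z); rewrite /lrev rev_cat !revK.
- by apply: nXy; apply: sub; move: Lyv; rewrite /lrev rev_cat.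
Qed.

(* Under topology the dual of a join-irreducible j = q^{-1}L is join-irreducible
   in LQ(L^r): j is the least element of LQ(L) containing some p, so dual(j) is
   the derivative (rev p)^{-1}L^r, and it is the least element of LQ(L^r)
   containing rev q. *)
Lemma dual_JI {j} : topological L -> JI L j -> JI (lrev L) (dual L j).
Proof.
move=> topo jJ; have [q jq] := JI_deriv finL jJ; subst j.
have [p jp] := join_prime_least finL jJ ((topological_join_prime finL).1 topo _ jJ).
have dualL : LQ (lrev L) (dual L (lderiv q L)) by rewrite (dual_least jp); apply: LQ_lderiv.
apply: (least_JI (p := rev q)); split=> //; first exact: dual_deriv.
by move=> K KL Kq; apply: dual_below.
Qed.

Definition dual_state (topo : topological L) (j : JIstate L) : JIstate (lrev L) :=
  exist _ (dual L (sval j)) (dual_JI topo (svalP j)).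

(* With Ms the union of the derivatives
   avoiding p, a derivative containing p below both Ms u Y and Ms u Z has a
   join-prime part containing p, which lies below Y and Z; if there is none,
   (rev p)^{-1}L^r splits as the union of dr_inv (Ms u Y) and dr_inv (Ms u Z),
   which is absurd. *)
Lemma directed_of_JI_rev p :
  topological L -> JI (lrev L) (lderiv (rev p) (lrev L)) -> directed L p.
Proof.
move=> topo KJ Y Z YL ZL Yp Zp.
pose K := lderiv (rev p) (lrev L).
have KE v : K v <-> L (rev v ++ p) by rewrite /K lderiv_lrev revK.
pose Ms := lderivs (fun u => ~ L (u ++ p)) L.
have Msp : ~ Ms p by case=> u [].
have drK X v : dr_inv L (lunion Ms X) v -> K v.
  move=> nsub; apply/KE; apply: contrapT => nLvp.
  by apply: nsub => w Lvw; left; exists (rev v).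
have [[v [Kv vY vZ]] | noV] := pselect (exists v,
    [/\ K v, ~ dr_inv L (lunion Ms Y) v & ~ dr_inv L (lunion Ms Z) v]).
- have [J [JJ Jv Jp]] := JI_cover finL (LQ_lderiv L (rev v)) (proj1 (KE v) Kv).
  have below X : LQ L X -> ~ dr_inv L (lunion Ms X) v -> lsub J X.
    move=> XL /contrapT vX.
    have [JMs | //] := (topological_join_prime finL).1 topo J JJ Ms X
      (LQ_lderivs finL _) XL (fun w Jw => vX w (Jv w Jw)).
    by case: Msp; apply: JMs.
  by have [JL _ _] := JJ; exists J; split; [| | apply: below | apply: below].
- have KU : K = lunion (dr_inv L (lunion Ms Y)) (dr_inv L (lunion Ms Z)).
    apply/predeqP => v; split=> [Kv | [/drK|/drK] //].
    by apply: contrapT => /not_orP [nY nZ]; apply: noV; exists v.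
  have notK X : LQ L X -> X p -> K <> dr_inv L (lunion Ms X).
    move=> XL Xp eK; have [u [uX Lup]] := LQ_cover XL Xp.
    have : K (rev u) by apply/KE; rewrite revK.
    by rewrite eK; apply; rewrite revK => w /uX; right.
  have [_ _ /(_ _ _ (LQ_dr_inv _) (LQ_dr_inv _) KU)] := KJ.
  by case=> eK; [case: (notK Y YL Yp eK) | case: (notK Z ZL Zp eK)].
Qed.

(* Under topology every join-irreducible K = x^{-1}L^r of LQ(L^r) is the dual
   of the least element of LQ(L) containing rev x. *)
Lemma dual_surj {K} : topological L -> JI (lrev L) K -> exists2 j, JI L j & dual L j = K.
Proof.
move=> topo KJ; have [x Kx] := JI_deriv finR KJ; subst K.
have [_ K0 _] := KJ.
have [v Kv] : exists v, lderiv x (lrev L) v.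
  apply: contrapT => noV; apply: K0; apply/predeqP => v.
  by split=> [Kv|[]]; apply: noV; exists v.
have dirx : directed L (rev x) by apply: directed_of_JI_rev; rewrite // revK.
have Lvx : lderiv (rev v) L (rev x) by move: Kv; rewrite lderiv_lrev.
have [j jx] := least_exists finL (LQ_lderiv L (rev v)) Lvx dirx.
by exists j; [apply: least_JI jx | rewrite (dual_least jx) revK].
Qed.

Lemma iso_dual (topo : topological L) (theta : JIstate L -> JIstate (lrev L)) :
  (forall j, sval (theta j) = dual L (sval j)) ->
  nfa_iso (canRFSA L) (nfa_rev (canRFSA (lrev L))) theta.
Proof.
move=> thetaE.
have deriv (j : JIstate L) : exists q, sval j = lderiv q L := JI_deriv finL (svalP j).
split=> [|j a k|j|j] /=; rewrite ?thetaE.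
-
  have inj : injective theta.
    move=> j k /(congr1 sval); rewrite !thetaE => e; apply: JIstate_eq.
    have [q1 e1] := deriv j; have [q2 e2] := deriv k.
    by rewrite e1 e2 in e *; apply: dual_inj.
  have surj y : exists x, theta x = y.
    have [j jJ jy] := dual_surj topo (svalP y).
    by exists (exist _ j jJ); apply: JIstate_eq; rewrite thetaE.
  have [g thetaK] := choice surj.
  by exists g => [x|y]; [apply: inj; rewrite thetaK | apply: thetaK].
- by have [q ->] := deriv j; apply: dual_trans.
- by split=> jL w; apply: jL.
- by have [q ->] := deriv j; apply: dual_final.
Qed.

End Duality.

Section Acceptance.
Context {A : finType}.

Fixpoint accepts (N : nfa A) (x : nstate _ N) (w : word A) : Prop :=
  if w is a :: w' then exists2 y, ntrans _ N x a y & accepts N y w'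
  else nfinal _ N x.

Lemma accepts_iso {N1 N2 : nfa A} {f} : nfa_iso N1 N2 f ->
  forall w x, accepts N1 x w <-> accepts N2 (f x) w.
Proof.
case=> [[g fK gK] trans _ final] w; elim: w => [|a w IH] x /=; first exact: final.
split=> [[y xy yw] | [y fxy yw]]; first by exists (f y); [apply/trans | apply/IH].
by exists (g y); [apply/trans; rewrite gK | apply/IH; rewrite gK].
Qed.

Lemma nfa_iso_rev {N1 N2 : nfa A} {f} : nfa_iso N1 N2 f -> nfa_iso (nfa_rev N1) (nfa_rev N2) f.
Proof. by case=> fbij trans init final; split=> // p a q; apply: trans. Qed.

Lemma accepts_rev_rev (N : nfa A) x w : accepts (nfa_rev (nfa_rev N)) x w <-> accepts N x w.
Proof. by elim: w x => [|a w IH] x //=; split=> -[y xy /IH yw]; exists y. Qed.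

End Acceptance.

Section CanonicalResidual.
Context {A : finType} {L : lang A} (finL : finite_residuals L).
Implicit Types (u v w q z : word A).

Lemma accepts_canRFSA (X : JIstate L) w : accepts (canRFSA L) X w <-> sval X w.
Proof.
elim: w X => [|a w IH] X //=; split=> [[Y XY /IH Yw] | Xaw]; first exact: XY.
have aXL : LQ L (lderiv [:: a] (sval X)) by apply: LQ_lderiv1; case: (svalP X).
have [J [JJ Ja Jw]] := JI_cover finL aXL Xaw.
by exists (exist _ J JJ) => //; apply/IH.
Qed.

Lemma accepts_rev_dual (X : JIstate L) w :
  accepts (nfa_rev (canRFSA L)) X w -> dual L (sval X) w.
Proof.
elim: w X => [|a w IH] X /=; first by move=> XL z /XL.
by case=> Y XY /IH Yw z /XY /Yw; rewrite /lderiv rev_cons cat_rcons.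
Qed.

Lemma accepts_rev_cover {w z} : lderiv (rev w) L z ->
  exists2 Y : JIstate L, accepts (nfa_rev (canRFSA L)) Y w & sval Y z.
Proof.
elim: w z => [|a w IH] z /=.
  move=> Lz; have [J [JJ JL Jz]] := JI_cover finL (LQ_lderiv L [::]) Lz.
  by exists (exist _ J JJ).
rewrite /lderiv rev_cons cat_rcons => /IH [Y Yw Yaz].
have aYL : LQ L (lderiv [:: a] (sval Y)) by apply: LQ_lderiv1; case: (svalP Y).
have [J [JJ Ja Jz]] := JI_cover finL aYL Yaz.
by exists (exist _ J JJ) => //; exists Y.
Qed.

(* A state X = q^{-1}L of N_L is reached on q: X is the union of the states
   reached on q, which all lie below X, and X is join-irreducible. *)
Lemma accepts_rev_deriv (X : JIstate L) q :
  sval X = lderiv q L -> accepts (nfa_rev (canRFSA L)) X (rev q).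
Proof.
move=> Xq.
have belowX (Y : JIstate L) :
    accepts (nfa_rev (canRFSA L)) Y (rev q) -> lsub (sval Y) (sval X).
  by move/accepts_rev_dual; rewrite /dual revK Xq.
pose U u := exists2 Y : JIstate L,
  accepts (nfa_rev (canRFSA L)) Y (rev q) & lsub (lderiv u L) (sval Y).
have XU : sval X = lderivs U L.
  apply/predeqP => w; split=> [Xw | [u [[Y Yq uY] Luw]]]; last exact/(belowX Y)/uY.
  have qw : lderiv (rev (rev q)) L w by rewrite revK -Xq.
  have [Y Yq Yw] := accepts_rev_cover qw; have [YL _ _] := svalP Y.
  by have [u [uY Luw]] := LQ_cover YL Yw; exists u; split=> //; exists Y.
have [u [Y Yq uY] Xu] := union_prime_deriv finL (JI_union_prime (svalP X)) XU.
suff -> : X = Y by [].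
apply/JIstate_eq/predeqP => w; split=> [|/(belowX Y Yq)] //.
by rewrite Xu => /uY.
Qed.

End CanonicalResidual.

(* In a biRFSA, the state of N_{L^r} matched with a state X = q^{-1}L of N_L
   accepts exactly the reversals of the words leading to X; this language lies
   in dual(X) and contains rev q, so it equals dual(X), which thus belongs to
   LQ(L^r), and X is join-prime. *)
Lemma biRFSA_join_prime {A : finType} {L : lang A} :
  finite_residuals L -> finite_residuals (lrev L) ->
  biRFSA L -> forall X, JI L X -> join_prime L X.
Proof.
move=> finL finR [f fiso] X XJ; have [q Xq] := JI_deriv finL XJ; subst X.
pose x : JIstate L := exist _ _ XJ.
have left_lang w : accepts (nfa_rev (canRFSA L)) x w <-> sval (f x) w.
  by rewrite (accepts_iso (nfa_iso_rev fiso)) accepts_rev_rev accepts_canRFSA.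
have [fxL _ _] := svalP (f x).
have fxE : sval (f x) = dual L (lderiv q L).
  apply/predeqP => w; split=> [fxw | ].
    by apply: (accepts_rev_dual x); apply/(left_lang w).
  have fxq : sval (f x) (rev q) by apply/left_lang; apply: accepts_rev_deriv.
  exact: dual_below fxL fxq w.
have [p qp] : exists p, least L p (lderiv q L) by apply: least_of_LQ_dual; rewrite -fxE.
exact: least_join_prime qp.
Qed.

Theorem mainTheorem20 (A : finType) (L : lang A) :
  regular L ->
  (biRFSA L <-> topological L) /\
  (topological L ->
    (exists theta : JIstate L -> JIstate (lrev L),
        forall j, dr L (sval (theta j)) = tau L (sval j)) /\
    (forall theta : JIstate L -> JIstate (lrev L),
        (forall j, dr L (sval (theta j)) = tau L (sval j)) ->
        nfa_iso (canRFSA L) (nfa_rev (canRFSA (lrev L))) theta)).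
Proof.
move=> regL; have finL := regular_finite_residuals regL.
have finR := regular_rev_finite_residuals regL.
split; first split.
- by move/(biRFSA_join_prime finL finR)/(topological_join_prime finL).
- by move=> topo; exists (dual_state finL topo); apply: (iso_dual finL finR topo) => j.
move=> topo; split; first by exists (dual_state finL topo) => j; apply: dr_dual.
move=> theta thetaE; apply: (iso_dual finL finR topo) => j.
have [thetaL _ _] := svalP (theta j); have [dualL _ _] := dual_JI finL topo (svalP j).
by apply: dr_inj thetaL dualL _; rewrite thetaE dr_dual.
Qed.
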